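(* Let $P$ be a finite semipure poset of length $n$ having both a unique minimum element $\hat 0$ and a unique maximum element, $t\ge1$, $\lambda_P:\mathrm{Cov}(\hat P)\to L_P$ an EL-labeling, and $\lambda$ the induced EL-labeling of $\widehat{P*T_{t,n}}$, restricted to the interval $(P*T_{t,n})^+=[(\hat 0,\hat 0_T),\hat 1]$. Then the number of ascent free maximal chains of $(P*T_{t,n})^+$ equals $$\sum_{\substack{w\in\mathrm{NDA}_n(L_P)\\ w_{n-1}\not\le w_n}} c(w)\,t^{\mathrm{asc}(w)+1}(1+t)^{n-1-2\,\mathrm{asc}(w)},$$ where $c(w)$ is the number of maximal chains of $P$ whose label sequence under $\lambda_P$ (restricted to $\mathrm{Cov}(P)$) is $w$.
   Context: Rees product $P*Q$ of semipure posets (rank $r_P(x)$ = common length of maximal chains of $P_{\le x}$): the set $\{(p,q): r_P(p)\ge r_Q(q)\}$ with $(p_1,q_1)\le(p_2,q_2)$ iff $p_1\le p_2$, $q_1\le q_2$, $r_P(p_2)-r_P(p_1)\ge r_Q(q_2)-r_Q(q_1)$. $T_{t,n}$: sequences over $\{1,\dots,t\}$ of length $\le n$ ordered by prefix, minimum $\hat 0_T$, rank = length. $\hat Q$: $Q$ with a new minimum and new maximum adjoined (even if $Q$ already has them); for $\hat P$ these are $\hat 0_P,\hat 1_P$. $Q^+$ denotes $Q$ with a new maximum adjoined; $(P*T_{t,n})^+$ is identified with the interval $[(\hat 0,\hat 0_T),\hat 1]$ of $\widehat{P*T_{t,n}}$. An edge labeling $\lambda:\mathrm{Cov}(Q)\to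 L$ of a bounded poset is an EL-labeling if each interval $[x,y]$ has a unique maximal chain with weakly increasing labels and its label sequence lexicographically precedes those of all other maximal chains of $[x,y]$. The induced labeling $\lambda$ of $\widehat{P*T_{t,n}}$ takes values in $L_P\times\{0<1\}$ (product order): the minimum is identified with $(\hat 0_P,\hat 0_T)$; for a cover $(x,k)\lessdot(y,l)$ with $(y,l)\ne\hat 1$, $\lambda=(\lambda_P(x,y),1)$ if $k<l$ and $(\lambda_P(x,y),0)$ if $k=l$; for $(x,k)\lessdot\hat 1$, $\lambda=(\lambda_P(x,\hat 1_P),0)$. A maximal chain is ascent free if no two consecutive labels $a,b$ satisfy $a\le b$. For a word $w$ of length $N$ over a poset $A$: $i\in[N-1]$ is an ascent if $w_i\le w_{i+1}$; $\mathrm{asc}(w)$ counts ascents; a double ascent is $i\in[N-2]$ with $w_i\le w_{i+1}\le w_{i+2}$; $\mathrm{NDA}_N(A)$ is the set of length-$N$ words over $A$ without double ascents. *)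

From HB Require Import structures.
From mathcomp Require Import all_boot all_order.
Set Implicit Arguments. Unset Strict Implicit. Unset Printing Implicit Defensive.
Import Order.TTheory.

Section Generic.
Variable T : finType.
Variable le : rel T.

Definition ltR (x y : T) : bool := le x y && (x != y).

Definition coversb (x y : T) : bool :=
  ltR x y && [forall z, ~~ (ltR x z && ltR z y)].

Definition is_maxchain (x y : T) (s : seq T) : bool :=
  if s is a :: s' then [&& a == x, path coversb a s' & last a s' == y]
  else false.

Definition labels (L : Type) (lab : T -> T -> L) (s : seq T) : seq L :=
  if s is a :: s' then pairmap lab a s' else [::].
End Generic.

Definition lexlt (L : eqType) (leL : rel L) (a b : seq L) : Prop :=
  (exists (u : seq L) (x y : L) (a' b' : seq L),
      [/\ a = u ++ x :: a', b = u ++ y :: b', leL x y & x != y])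
  \/ (exists v : seq L, v != [::] /\ b = a ++ v).

Definition EL_labeling (T : finType) (le : rel T) (L : eqType) (leL : rel L)
  (lab : T -> T -> L) : Prop :=
  forall x y : T, le x y ->
  exists s : seq T,
    [/\ is_maxchain le x y s,
        sorted leL (labels lab s),
        (forall s', is_maxchain le x y s' -> sorted leL (labels lab s') -> s' = s)
      & (forall s', is_maxchain le x y s' -> s' != s ->
           lexlt leL (labels lab s) (labels lab s'))].

Definition card_is (X : eqType) (A : pred X) (N : nat) : Prop :=
  exists l : seq X, [/\ uniq l, (forall x, (x \in l) = A x) & size l = N].

(* Hat construction: adjoin a new minimum (None) and a new maximum     *)
(* (Some None); old elements are Some (Some x).                        *)
Definition hat (X : Type) := option (option X).
Definition hbot {X : Type} : hat X := None.
Definition htop {X : Type} : hat X := Some None.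
Definition hin {X : Type} (x : X) : hat X := Some (Some x).

Definition hle (X : Type) (le : X -> X -> bool) (a b : hat X) : bool :=
  match a, b with
  | None, _ => true
  | _, None => false
  | Some None, Some None => true
  | Some None, Some (Some _) => false
  | Some (Some _), Some None => true
  | Some (Some x), Some (Some y) => le x y
  end.

Section PosetP.
Variables (d : Order.disp_t) (P : finPOrderType d).
Local Open Scope order_scope.

Definition chainb (C : {set P}) : bool :=
  [forall x in C, forall y in C, (x <= y) || (y <= x)].

Definition downset (x : P) : {set P} := [set y | y <= x].

Definition maxchain_in (S C : {set P}) : bool :=
  [&& C \subset S, chainb C &
      [forall D : {set P}, ((C \proper D) && (D \subset S)) ==> ~~ chainb D]].

Definition semipure : Prop :=
  forall (x : P) (C D : {set P}),
    maxchain_in (downset x) C -> maxchain_in (downset x) D -> #|C| = #|D|.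

(* rank: the (common, for semipure P) length of maximal chains of P_{<= x} *)
Definition rankP (x : P) : nat :=
  (\max_(C : {set P} | maxchain_in (downset x) C) #|C|).-1.

Definition poset_length : nat :=
  (\max_(C : {set P} | maxchain_in setT C) #|C|).-1.

Definition poset_le : rel P := fun x y => x <= y.
End PosetP.

(* T_{t,n}: sequences over {1..t} (here 'I_t) of length <= n, ordered  *)
(* by prefix, rank = length. Encoded as a tagged tuple.                *)
Definition Tseq (t n : nat) := {k : 'I_n.+1 & k.-tuple 'I_t}.
Definition tseq (t n : nat) (a : Tseq t n) : seq 'I_t := tval (tagged a).
Definition Tnil (t n : nat) : Tseq t n :=
  @Tagged 'I_n.+1 ord0 (fun k : 'I_n.+1 => k.-tuple 'I_t) [tuple].

Section Rees.
Variables (d : Order.disp_t) (P : finPOrderType d) (t n : nat).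
Local Open Scope order_scope.

Definition rees_mem (x : P * Tseq t n) : bool :=
  (size (tseq x.2) <= rankP x.1)%N.

Definition Rees := {x : P * Tseq t n | rees_mem x}.

(* (p1,q1) <= (p2,q2) iff p1 <= p2, q1 prefix of q2, and
   r_P(p2) - r_P(p1) >= r_T(q2) - r_T(q1)  (stated without subtraction) *)
Definition reesle (a b : Rees) : bool :=
  [&& (val a).1 <= (val b).1,
      prefix (tseq (val a).2) (tseq (val b).2) &
      (size (tseq (val b).2) + rankP (val a).1
         <= rankP (val b).1 + size (tseq (val a).2))%N].

Definition rees_bot (bot : P) : Rees :=
  @exist _ rees_mem (bot, Tnil t n) (leq0n (rankP bot)).

Definition tlt (q1 q2 : Tseq t n) : bool :=
  prefix (tseq q1) (tseq q2) && (tseq q1 != tseq q2).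

Variables (L : Type) (lamP : hat P -> hat P -> L).

(* induced labeling of hat(P * T_{t,n}), values in L_P x {0 < 1};
   the new minimum is identified with (0^_P, 0^_T). *)
Definition induced_label (a b : hat Rees) : L * bool :=
  match a, b with
  | Some (Some u), Some (Some v) =>
      (lamP (hin (val u).1) (hin (val v).1), tlt (val u).2 (val v).2)
  | Some (Some u), Some None => (lamP (hin (val u).1) htop, false)
  | None, Some (Some v) => (lamP hbot (hin (val v).1), tlt (Tnil t n) (val v).2)
  | _, _ => (lamP hbot hbot, false)
  end.
End Rees.

Definition prodle (d' : Order.disp_t) (L : porderType d') (a b : L * bool) : bool :=
  ((a.1 <= b.1)%O && (a.2 ==> b.2)).

Definition ascent_free (X : Type) (leX : rel X) (w : seq X) : bool :=
  sorted (fun a b => ~~ leX a b) w.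

Section Words.
Variables (d' : Order.disp_t) (L : porderType d').
Local Open Scope order_scope.

Definition asc (w : seq L) : nat :=
  count (fun p : L * L => p.1 <= p.2) (zip w (behead w)).

Fixpoint noDA (w : seq L) : bool :=
  match w with
  | a :: ((b :: c :: _) as w') => ~~ ((a <= b) && (b <= c)) && noDA w'
  | _ => true
  end.

Definition NDA (N : nat) (w : seq L) : bool := (size w == N) && noDA w.

(* N-1 is not an ascent of w (N = size w): w_{N-1} not <= w_N;
   vacuous when N < 2 (then N-1 is not in [N-1]). *)
Definition last_not_ascent (w : seq L) : bool :=
  match rev w with
  | z :: y :: _ => ~~ (y <= z)
  | _ => true
  end.

Fixpoint words (A : seq L) (N : nat) : seq (seq L) :=
  if N is N'.+1 then [seq a :: u | a <- A, u <- words A N'] else [:: [::]].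
End Words.

Definition cP (d : Order.disp_t) (P : finPOrderType d) (bot top : P)
  (L : eqType) (lamP : hat P -> hat P -> L) (w : seq L) : nat :=
  #|[set s : (size w).+1.-tuple P |
       is_maxchain (@poset_le d P) bot top s &&
       (labels (fun a b => lamP (hin a) (hin b)) s == w)]|.

(* the labels that occur on covers of P (a finite superset of all
   letters of label sequences of maximal chains of P) *)
Definition labels_of_P (d : Order.disp_t) (P : finPOrderType d)
  (L : Type) (lamP : hat P -> hat P -> L) : seq L :=
  [seq lamP (hin a) (hin b) | a <- enum P, b <- enum P].

From HB Require Import structures.
From mathcomp Require Import all_boot all_order zify.
Set Implicit Arguments. Unset Strict Implicit. Unset Printing Implicit Defensive.
Import Order.TTheory.

(* A maximal chain of (P * T_{t,n})^+ is the same thing as a maximal chain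
   0 = x_0 <. x_1 <. ... <. x_n = 1 of P together with an extension word
   e = e_1 ... e_n over {None} + {1..t}: along the i-th cover the word
   coordinate is extended by the letter e_i, or kept when e_i = None, and the
   chain ends with a cover into the new maximum.  This bijection ([lift_chain],
   [lift_chain_sound], [lift_chain_complete]) rests on the description of the
   covers of the Rees product, which needs the rank theory of semipure posets.
   Along a lifted chain the induced labels are (lambda_P(x_{i-1},x_i), e_i <> None)
   followed by (lambda_P(1,1^), false); the EL property is used only to see that
   this last label dominates lambda_P(x_{n-1},1).  For a fixed chain with label
   word w, a transfer recursion along w ([ext_count_closed]) shows that the
   number of extension words making the lifted chain ascent free is [weight w],
   i.e. t^(asc w + 1) (1+t)^(n-1-2 asc w) when w has no double ascent and its
   last position is no ascent, and 0 otherwise.  Summing over the chains of P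
   and regrouping them by label word ([sum_by_value]) gives the theorem. *)

Lemma no_cover_hbot (X : finType) (le : rel X) (a : hat X) :
  coversb (hle le) a hbot = false.
Proof. by case: a => [[?|]|]; rewrite /coversb /ltR /= ?eqxx ?andbF. Qed.

Lemma no_cover_from_htop (X : finType) (le : rel X) (b : hat X) :
  coversb (hle le) htop b = false.
Proof. by case: b => [[?|]|] //; rewrite /coversb /ltR /= eqxx. Qed.

Lemma hin_eq (X : eqType) (a b : X) : (hin a == hin b :> hat X) = (a == b).
Proof. by apply/eqP/eqP => [[]|->]. Qed.

Section SemipureRank.
Variables (d : Order.disp_t) (P : finPOrderType d).
Local Open Scope order_scope.

Lemma maxchain_extend (S C : {set P}) : C \subset S -> chainb C ->
  exists D : {set P}, (C \subset D) && maxchain_in S D.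
Proof.
move=> CS cC.
pose p := fun D : {set P} => [&& C \subset D, D \subset S & chainb D].
have pC : p C by rewrite /p subxx CS cC.
case: (@arg_maxnP _ C p (fun D : {set P} => #|D|) pC) => D /and3P [CD DS cD] Dmax.
exists D; rewrite CD /maxchain_in DS cD /=.
apply/forallP => E; apply/implyP => /andP [DE ES]; apply/negP => cE.
have := Dmax E; rewrite /p (subset_trans CD (proper_sub DE)) ES cE => /(_ isT).
by rewrite -[X in X -> _]/(is_true (_ <= _)%N) leqNgt proper_card.
Qed.

Lemma exists_maxchain (S : {set P}) : exists D, maxchain_in S D.
Proof.
have chain0 : chainb (set0 : {set P}) by apply/forallP => a; rewrite inE.
by have [D /andP [_ mD]] := maxchain_extend (sub0set S) chain0; exists D.
Qed.

Lemma chain_cmp (C : {set P}) x y : chainb C -> x \in C -> y \in C ->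
  (x <= y) || (y <= x).
Proof. by move=> /forallP /(_ x) /implyP cC /cC /forallP /(_ y) /implyP. Qed.

Lemma chainU1 (x : P) C : chainb C -> {in C, forall y, (x <= y) || (y <= x)} ->
  chainb (x |: C).
Proof.
move=> cC hx; apply/forallP => a; apply/implyP => /setU1P [->|aC];
  apply/forallP => b; apply/implyP => /setU1P [->|bC].
- by rewrite lexx.
- exact: hx.
- by rewrite orbC; apply: hx.
- exact: chain_cmp cC aC bC.
Qed.

Lemma chainU1_downset (x y : P) (C : {set P}) : x <= y -> C \subset downset x -> chainb C ->
  chainb (y |: C) /\ y |: C \subset downset y.
Proof.
move=> xy CS cC; split.
  apply: chainU1 => // z /(subsetP CS); rewrite inE => zx.
  by rewrite (le_trans zx xy) orbT.
apply/subsetP => z /setU1P [->|/(subsetP CS)]; rewrite !inE ?lexx // => zx.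
exact: le_trans zx xy.
Qed.

Lemma maxchain_downset_mem (x : P) (C : {set P}) : maxchain_in (downset x) C -> x \in C.
Proof.
case/and3P => CS cC /forallP /(_ (x |: C)).
apply: contraLR => xC; rewrite negb_imply negbK; apply/andP; split.
  by rewrite properUr ?sub1set // subUset sub1set CS andbT inE lexx.
by case: (chainU1_downset (lexx x) CS cC).
Qed.

Hypothesis semi : semipure P.

Lemma card_maxchain_downset (x : P) C :
  maxchain_in (downset x) C -> #|C| = (rankP x).+1.
Proof.
move=> mC; rewrite /rankP.
have -> : (\max_(D | maxchain_in (downset x) D) #|D|)%N = #|C|.
  apply/eqP; rewrite eqn_leq; apply/andP; split.
    by apply/bigmax_leqP => D mD; rewrite (semi mD mC).
  exact: (@leq_bigmax_cond _ (maxchain_in (downset x)) (fun D : {set P} => #|D|)).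
by rewrite prednK // card_gt0; apply/set0Pn; exists x; apply: maxchain_downset_mem.
Qed.

Lemma rank_lt (x y : P) : x < y -> (rankP x < rankP y)%N.
Proof.
move=> xy; have [C mC] := exists_maxchain (downset x).
have /and3P [CS cC _] := mC.
have yC : y \notin C.
  apply/negP => /(subsetP CS); rewrite inE => yx.
  by move: (lt_le_trans xy yx); rewrite ltxx.
have [c1 s1] := chainU1_downset (ltW xy) CS cC.
have [D /andP [sD mD]] := maxchain_extend s1 c1.
have := subset_leq_card sD; rewrite cardsU1 yC (card_maxchain_downset mC).
by rewrite (card_maxchain_downset mD) add1n ltnS.
Qed.

Lemma rank_le (x y : P) : x <= y -> (rankP x <= rankP y)%N.
Proof. by rewrite le_eqVlt => /orP [/eqP ->//|/rank_lt/ltnW]. Qed.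

(* When x <. y, a maximal chain C of P_{<= x} gives the maximal chain y |: C
   of P_{<= y}: anything added between would lie strictly between x and y or
   extend C. *)
Lemma maxchain_cover (x y : P) C : coversb (@poset_le d P) x y ->
  maxchain_in (downset x) C -> forall D, maxchain_in (downset y) D ->
  y |: C \subset D -> D \subset y |: C.
Proof.
case/andP => /andP [xy xny] /forallP nb mC D mD sD.
have /and3P [CS cC mxC] := mC; have /and3P [DS cD _] := mD.
have xD : x \in D by apply: (subsetP sD); rewrite setU1r // maxchain_downset_mem.
apply/subsetP => z zD; have := subsetP DS z zD; rewrite inE => zy.
case/orP: (chain_cmp cD xD zD) => [xz | zx].
  have := nb z; case: (eqVneq z x) => [-> _|znx].
    by rewrite setU1r // maxchain_downset_mem.
  case: (eqVneq z y) => [-> _|zny]; first by rewrite setU11.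
  by rewrite /ltR /poset_le /= xz zy eq_sym znx zny.
case: (boolP (z \in C)) => [zC|zC]; first by rewrite setU1r.
move/forallP: mxC => /(_ (z |: C)) /implyP; rewrite properUr ?sub1set //.
rewrite subUset sub1set CS andbT inE zx => /(_ isT) /negP; case.
apply: chainU1 => // u uC; apply: chain_cmp cD zD _.
by apply: (subsetP sD); rewrite setU1r.
Qed.

Lemma rank_cover (x y : P) : coversb (@poset_le d P) x y -> rankP y = (rankP x).+1.
Proof.
move=> cxy; have /andP [/andP [xy xny] _] := cxy; rewrite /poset_le /= in xy.
have lxy : x < y by rewrite lt_def eq_sym xny xy.
apply/eqP; rewrite eqn_leq (rank_lt lxy) andbT.
have [C mC] := exists_maxchain (downset x); have /and3P [CS cC _] := mC.
have [c1 s1] := chainU1_downset xy CS cC.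
have [D /andP [sD mD]] := maxchain_extend s1 c1.
have := subset_leq_card (maxchain_cover cxy mC mD sD).
rewrite cardsU1 (card_maxchain_downset mC) (card_maxchain_downset mD).
by move=> h; exact: leq_trans h (leq_add (leq_b1 _) (leqnn _)).
Qed.

End SemipureRank.

Definition opt_seq (X : Type) (a : option X) : seq X := if a is Some x then [:: x] else [::].

Lemma prefix_size_eq (T : eqType) (a b : seq T) :
  prefix a b -> (size b <= size a)%N -> a = b.
Proof. by rewrite prefixE => /eqP h hs; rewrite -h take_oversize. Qed.

Section BoundedSemipure.
Variables (d : Order.disp_t) (P : finPOrderType d) (n : nat) (bot top : P).
Local Open Scope order_scope.
Hypotheses (hb : forall x : P, bot <= x) (ht : forall x : P, x <= top)
  (semi : semipure P) (hlen : poset_length P = n).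

Lemma rank_top : rankP top = n.
Proof.
rewrite -hlen /poset_length /rankP.
by have -> : downset top = setT by apply/setP => x; rewrite !inE ht.
Qed.

Lemma rank_le_length (x : P) : (rankP x <= n)%N.
Proof. by rewrite -rank_top; apply: rank_le. Qed.

Lemma rank_bot : rankP bot = 0%N.
Proof.
have [C mC] := exists_maxchain (downset bot).
have /and3P [CS _ _] := mC.
have : C \subset [set bot].
  apply/subsetP => z /(subsetP CS); rewrite !inE => zb.
  by apply/eqP; apply: le_anti; rewrite zb hb.
by move/subset_leq_card; rewrite cards1 (card_maxchain_downset semi mC) ltnS leqn0 => /eqP.
Qed.

Lemma rank_path (a : P) s : path (coversb (@poset_le d P)) a s ->
  rankP (last a s) = (rankP a + size s)%N.
Proof.
elim: s a => [|b s IH] a /=; first by rewrite addn0.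
by case/andP => cab /IH ->; rewrite (rank_cover semi cab) addSn addnS.
Qed.

Lemma maxchain_size c : is_maxchain (@poset_le d P) bot top c -> size c = n.+1.
Proof.
case: c => [|a s] //= /and3P [/eqP -> /rank_path + /eqP ls].
by rewrite ls rank_top rank_bot add0n => ->.
Qed.

End BoundedSemipure.

Lemma tseq_inj (t n : nat) : injective (@tseq t n).
Proof.
case=> k a [k' b]; rewrite /tseq /= => e.
have ek : k = k' by apply: val_inj; rewrite /= -(size_tuple a) -(size_tuple b) e.
by subst k'; congr Tagged; apply: val_inj.
Qed.

Lemma tseq_onto (t n : nat) (q : seq 'I_t) : (size q <= n)%N ->
  exists a : Tseq t n, tseq a = q.
Proof.
move=> h.
by exists (@Tagged 'I_n.+1 (Ordinal (h : size q < n.+1)%N)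
                   (fun k : 'I_n.+1 => k.-tuple 'I_t) (in_tuple q)).
Qed.

Section ReesCovers.
Variables (d : Order.disp_t) (P : finPOrderType d) (n t : nat) (bot top : P).
Local Open Scope order_scope.
Hypotheses (ht : forall x : P, x <= top) (semi : semipure P)
  (hlen : poset_length P = n).

Notation R := (Rees P t n).
Notation RL := (hle (@reesle d P t n)).
Notation PL := (@poset_le d P).

Definition rx (u : R) : P := (val u).1.
Definition rw (u : R) : seq 'I_t := tseq (val u).2.

Lemma rw_size (u : R) : (size (rw u) <= rankP (rx u))%N.
Proof. exact: (valP u). Qed.

Lemma rees_ext (u v : R) : rx u = rx v -> rw u = rw v -> u = v.
Proof.
move=> e1 /tseq_inj e2; apply: val_inj.
by move: e1 e2; rewrite /rx; case: (val u) => ??; case: (val v) => ?? /= -> ->.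
Qed.

Lemma rees_exists (x : P) q : (size q <= rankP x)%N ->
  exists u : R, rx u = x /\ rw u = q.
Proof.
move=> h; have [a ea] := tseq_onto (n := n) (leq_trans h (rank_le_length ht semi hlen x)).
have hm : rees_mem (x, a) by rewrite /rees_mem /= ea.
by exists (exist _ (x, a) hm).
Qed.

Lemma reesleE (u v : R) : reesle u v =
  [&& rx u <= rx v, prefix (rw u) (rw v) &
      (size (rw v) + rankP (rx u) <= rankP (rx v) + size (rw u))%N].
Proof. by []. Qed.

(* The element (x, q) of hat(P * T_{t,n}) (a default value when (x, q) is not
   in the Rees product). *)
Definition rees_of (x : P) (q : seq 'I_t) : hat R :=
  if [pick u : R | (rx u == x) && (rw u == q)] is Some u then hin u else hbot.

Lemma rees_ofE (u : R) : rees_of (rx u) (rw u) = hin u.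
Proof.
rewrite /rees_of; case: pickP => [w /andP [/eqP e1 /eqP e2]|/(_ u)].
  by rewrite (rees_ext e1 e2).
by rewrite !eqxx.
Qed.

Lemma rees_of_exists (x : P) q : (size q <= rankP x)%N ->
  exists u : R, [/\ rees_of x q = hin u, rx u = x & rw u = q].
Proof.
by move=> /rees_exists [u [e1 e2]]; exists u; rewrite -e1 -e2 rees_ofE.
Qed.

Lemma reesle_same_x (u v : R) : reesle u v -> rx u = rx v -> u = v.
Proof.
rewrite reesleE => /and3P [_ pq sz] e; apply: rees_ext (prefix_size_eq pq _) => //.
have := size_prefix pq; move: sz; rewrite e.
set A := size _; set B := size _; set r := rankP _; lia.
Qed.

(* A cover of the Rees product projects to a cover of P: an element strictly
   between the P-coordinates lifts (with a suitable prefix of the larger word)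
   to an element strictly between in the Rees product. *)
Lemma rees_cover_P (u v : R) : coversb RL (hin u) (hin v) -> coversb PL (rx u) (rx v).
Proof.
move=> /andP [/andP [luv nuv] /forallP nb]; rewrite hin_eq in nuv.
have xne : rx u != rx v by apply: contra nuv => /eqP /(reesle_same_x luv) ->.
rewrite /= reesleE in luv; move/and3P: luv => [lx pq sz].
have sp := size_prefix pq; have qsu := rw_size u.
rewrite /coversb /ltR /poset_le /= lx xne /=; apply/forallP => z.
apply/negP => /andP [/andP [xz nxz] /andP [zy nzy]].
have r1 : (rankP (rx u) < rankP z)%N by apply: (rank_lt semi); rewrite lt_def eq_sym nxz xz.
have r2 : (rankP z < rankP (rx v))%N by apply: (rank_lt semi); rewrite lt_def eq_sym nzy zy.
set k := minn (size (rw v)) (size (rw u) + (rankP z - rankP (rx u))).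
have hk : (size (take k (rw v)) <= rankP z)%N.
  rewrite size_take_min; move: qsu r1 r2; rewrite /k.
  set A := size _; set B := size _; set r := rankP _; set r' := rankP _; set r'' := rankP _; lia.
have [w [wx wq]] := rees_exists hk.
move: (nb (hin w)); rewrite /ltR /= !reesleE !hin_eq wx wq xz zy /=.
have -> : (u != w) by apply/eqP => e; move: nxz; rewrite -wx e eqxx.
have -> : (w != v) by apply/eqP => e; move: nzy; rewrite -wx e eqxx.
rewrite prefix_take !andbT size_take_min.
have -> : prefix (rw u) (take k (rw v)).
  move: pq; rewrite !prefixE take_takel //; rewrite /k.
  move: sp; set A := size _; set B := size _; lia.
move: sz r1 r2 qsu sp; rewrite /k.
set A := size _; set B := size _; set r := rankP _; set r' := rankP _; set r'' := rankP _.
by move=> *; apply/negP; lia.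
Qed.

Lemma rees_cover_word (u v : R) : coversb RL (hin u) (hin v) ->
  exists a, rw v = rw u ++ opt_seq a.
Proof.
move=> cuv; have rc := rank_cover semi (rees_cover_P cuv).
move: cuv => /andP [/andP [luv _] _]; rewrite /= reesleE in luv.
move/and3P: luv => [_ /prefixP [r er] sz]; rewrite er.
have : (size r <= 1)%N.
  move: sz; rewrite er size_cat rc; set A := size _; set B := size r; set C := rankP _; lia.
case: r {er sz} => [|a [|b r]] //= _; first by exists None.
by exists (Some a).
Qed.

Lemma rees_cover_of_P (u v : R) a : coversb PL (rx u) (rx v) ->
  rw v = rw u ++ opt_seq a -> coversb RL (hin u) (hin v).
Proof.
move=> cov eq; have rc := rank_cover semi cov.
move: (cov) => /andP [/andP [lx xne] /forallP nb]; rewrite /poset_le /= in lx.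
have unv : u != v by apply: contraNneq xne => ->.
have sa : (size (opt_seq a) <= 1)%N by case: a {eq}.
rewrite /coversb /ltR /= reesleE hin_eq unv lx eq prefix_prefix andbT /=.
apply/andP; split.
  rewrite size_cat rc; move: sa; set A := size _; set B := size _; set r := rankP _; lia.
apply/forallP => [[[w|]|]] //=; rewrite hin_eq.
apply/negP => /andP [/andP [uw n1] /andP [wv n2]].
move: (uw) (wv); rewrite !reesleE => /and3P [l1 _ _] /and3P [l2 _ _].
have := nb (rx w); rewrite /ltR /poset_le /= l1 l2 /=.
case: (eqVneq (rx u) (rx w)) => [/(reesle_same_x uw) e|_]; first by rewrite e eqxx in n1.
case: (eqVneq (rx w) (rx v)) => [/(reesle_same_x wv) e|//].
by rewrite e eqxx in n2.
Qed.

Lemma rees_cover_top (u : R) : coversb RL (hin u) htop = (rx u == top).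
Proof.
apply/idP/eqP => [/andP [_ /forallP nb]|e].
  apply/eqP; apply: contraT => nt.
  have hs : (size (rw u) <= rankP top)%N := leq_trans (rw_size u) (rank_le semi (ht _)).
  have [w [wx wq]] := rees_exists hs.
  move: (nb (hin w)); rewrite /ltR /= reesleE hin_eq wx wq ht prefix_refl andbT /=.
  have -> : u != w by apply: contraNneq nt => ->; rewrite wx.
  by rewrite addnC leq_add2r (rank_le semi (ht _)).
rewrite /coversb /ltR /=; apply/forallP => [[[w|]|]] //=.
rewrite hin_eq andbT; apply/negP => /andP [uw nuw].
have ew : rx u = rx w.
  by apply: le_anti; rewrite {2}e ht andbT; move: uw; rewrite reesleE => /and3P [].
by rewrite (reesle_same_x uw ew) eqxx in nuw.
Qed.

Fixpoint lift_chain (x0 : P) (q : seq 'I_t) (c : seq P) (e : seq (option 'I_t)) :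
    seq (hat R) :=
  rees_of x0 q :: match c, e with
   | x1 :: c', a :: e' => lift_chain x1 (q ++ opt_seq a) c' e'
   | _, _ => [:: htop] end.

Definition hat_x (h : hat R) : P := if h is Some (Some w) then rx w else bot.
Definition hat_word (h : hat R) : seq 'I_t := if h is Some (Some w) then rw w else [::].
Definition hat_step (h h' : hat R) : option 'I_t :=
  ohead (drop (size (hat_word h)) (hat_word h')).

Variables (d' : Order.disp_t) (L : porderType d') (lamP : hat P -> hat P -> L).

Fixpoint lifted_labels (x0 : P) (c : seq P) (e : seq (option 'I_t)) : seq (L * bool) :=
  match c, e with
   | x1 :: c', a :: e' => (lamP (hin x0) (hin x1), isSome a) :: lifted_labels x1 c' e'
   | _, _ => [:: (lamP (hin x0) htop, false)] end.

Lemma induced_label_step (u v : R) a : rw v = rw u ++ opt_seq a ->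
  induced_label lamP (hin u) (hin v) = (lamP (hin (rx u)) (hin (rx v)), isSome a).
Proof.
move=> e; rewrite /induced_label /tlt; congr pair.
rewrite -/(rw u) -/(rw v) e prefix_prefix /=.
case: a {e} => [x|] /=; rewrite ?cats0 ?eqxx //.
by apply/eqP => /(f_equal size); rewrite size_cat addn1 => /n_Sn.
Qed.

Lemma lift_chain_sound c : forall e (u : R), path (coversb PL) (rx u) c ->
  last (rx u) c = top -> size e = size c ->
  let s := lift_chain (rx u) (rw u) c e in
  [/\ s = hin u :: behead s,
      path (coversb RL) (hin u) (behead s) /\ last (hin u) (behead s) = htop,
      map hat_x s = rcons (rx u :: c) bot,
      pairmap hat_step (hin u) (behead s) = rcons e None
    & pairmap (induced_label lamP) (hin u) (behead s) = lifted_labels (rx u) c e].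
Proof.
elim: c => [|x1 c IH] [|a e] u //= pc lc se.
  by rewrite rees_ofE /= rees_cover_top -lc eqxx; split.
case/andP: pc => cx pc.
have hs : (size (rw u ++ opt_seq a) <= rankP x1)%N.
  rewrite size_cat (rank_cover semi cx) -addn1 leq_add ?rw_size //.
  by case: (a).
have [w [ew wx wq]] := rees_of_exists hs.
move: (IH e w); rewrite wx wq => /(_ pc lc (eq_add_S _ _ se)) [e1 [p1 l1] m1 d1 i1].
move: e1 p1 l1 m1 d1 i1; set F := lift_chain _ _ _ _; set s' := behead F.
clearbody s'; clearbody F => e1 p1 l1 m1 d1 i1.
rewrite rees_ofE e1; split => //.
- by rewrite /= (rees_cover_of_P (a := a)) ?wx ?wq.
- by rewrite -e1 /= m1.
- by rewrite /= d1 /hat_step /= wq drop_size_cat //; case: (a).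
- rewrite -[pairmap _ _ (_ :: _)]/(induced_label lamP (hin u) (hin w)
      :: pairmap (induced_label lamP) (hin w) s').
  by rewrite i1 (induced_label_step wq) wx.
Qed.

Lemma lift_chain_complete s : forall (u : R), path (coversb RL) (hin u) s ->
  last (hin u) s = htop ->
  exists c e, [/\ path (coversb PL) (rx u) c, last (rx u) c = top, size e = size c &
    hin u :: s = lift_chain (rx u) (rw u) c e].
Proof.
elim: s => [|v s IH] u /=; first by move=> _ [].
case/andP => cv ps ls.
case: v cv ps ls => [[w|]|] cv ps ls; last by rewrite no_cover_hbot in cv.
- have cx := rees_cover_P cv; have [a eq] := rees_cover_word cv.
  have [c [e [pc lc se ee]]] := IH w ps ls.
  exists (rx w :: c), (a :: e); split => //=; first by rewrite cx.
  + by rewrite se.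
  + by rewrite rees_ofE -eq ee.
- case: s {IH} ps ls => [|b s] /=; last by rewrite no_cover_from_htop.
  move=> _ _; exists [::], [::]; split => //=; first by apply/eqP; rewrite -rees_cover_top.
  by rewrite rees_ofE.
Qed.

End ReesCovers.

(* All words of length m over the alphabet A (the order-free version of
   [words]). *)
Fixpoint words_over (X : Type) (A : seq X) (m : nat) : seq (seq X) :=
  if m is m'.+1 then [seq a :: u | a <- A, u <- words_over A m'] else [:: [::]].

Lemma words_words_over (d' : Order.disp_t) (L : porderType d') (A : seq L) N :
  words A N = words_over A N.
Proof. by elim: N => //= N ->. Qed.

Lemma count_allpairs (S T U : Type) (f : S -> T -> U) (s : seq S) (u : seq T)
    (p : pred U) :
  count p [seq f x y | x <- s, y <- u] = \sum_(x <- s) count (fun y => p (f x y)) u.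
Proof.
elim: s => [|a s IH]; first by rewrite big_nil.
by rewrite big_cons -IH /= count_cat count_map.
Qed.

Lemma count_words_over_succ (X : Type) (A : seq X) m (p : pred (seq X)) :
  count p (words_over A m.+1) = \sum_(a <- A) count (fun u => p (a :: u)) (words_over A m).
Proof. exact: count_allpairs. Qed.

Lemma mem_words_over (X : eqType) (A : seq X) m u :
  (u \in words_over A m) = (size u == m) && all (mem A) u.
Proof.
elim: m u => [|m IH] [|a u]; rewrite /= ?inE //.
- by apply/negP => /allpairsP [[b v] [_ _ /= e]].
- apply/allpairsP/idP => [[[b v] /= [bA vw [-> ->]]]|/andP [su /andP [aA uA]]].
    by move: vw; rewrite IH => /andP [/eqP -> ->]; rewrite eqxx bA.
  by exists (a, u); split => //; rewrite /= IH -eqSS su.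
Qed.

Lemma uniq_words_over (X : eqType) (A : seq X) m : uniq A -> uniq (words_over A m).
Proof.
move=> uA; elim: m => [|m IH] //=.
by apply: allpairs_uniq => // [[a u] [b v]] _ _ /= [-> ->].
Qed.

Lemma card_tuple_count (X : finType) k (p : pred (seq X)) :
  #|[set s : k.-tuple X | p s]| = count p (words_over (enum X) k).
Proof.
rewrite -sum1dep_card sum1_count -(count_map val p).
apply/permP; apply: uniq_perm.
- by rewrite map_inj_uniq ?index_enum_uniq //; apply: val_inj.
- exact/uniq_words_over/enum_uniq.
- move=> x; rewrite mem_words_over; apply/mapP/andP => [[s _ ->]|[/eqP sx _]].
    by split; [rewrite size_tuple | apply/allP => y _; apply: mem_enum].
  by exists (Tuple (introT eqP sx)); rewrite ?mem_index_enum.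
Qed.

Lemma sum_by_value (X : eqType) (Y : Type) (W : seq X) (cs : seq Y) (f : Y -> X)
    (g : X -> nat) : uniq W -> all (fun c => f c \in W) cs ->
  (\sum_(w <- W) count (fun c => f c == w) cs * g w = \sum_(c <- cs) g (f c))%N.
Proof.
move=> uW; elim: cs => [|c cs IH] /=; first by rewrite big_nil big1.
case/andP => fcW /IH IHcs; rewrite big_cons -IHcs.
rewrite (eq_bigr (fun w => (f c == w) * g w + count (fun c => f c == w) cs * g w)%N);
  last by move=> w _; rewrite mulnDl.
rewrite big_split /= (bigD1_seq (f c)) //= eqxx mul1n big1 ?addn0 // => w.
by rewrite eq_sym => /negbTE ->.
Qed.

(* The letters of extension words: None (the word coordinate is kept) or a
   letter of {1..t} (the word coordinate grows). *)
Definition ext_letters (t : nat) : seq (option 'I_t) := None :: map Some (enum 'I_t).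

(* Counting extension words by their first letter: one way to keep, t ways to
   grow. *)
Lemma count_ext_words t m (p : pred (seq bool)) :
  count (fun e => p (map isSome e)) (words_over (ext_letters t) m.+1) =
  (count (fun e => p (false :: map isSome e)) (words_over (ext_letters t) m) +
   t * count (fun e => p (true :: map isSome e)) (words_over (ext_letters t) m))%N.
Proof.
rewrite count_words_over_succ /ext_letters big_cons big_map /=; congr (_ + _)%N.
rewrite (eq_bigr (fun _ => count (fun e => p (true :: map isSome e))
                                  (words_over (ext_letters t) m))) //.
by rewrite big_const_seq count_predT size_enum_ord iter_addn_0 mulnC.
Qed.

Lemma count_andl (X : Type) (b : bool) (p : pred X) s :
  count (fun x => b && p x) s = (b * count p s)%N.
Proof. by case: b => /=; rewrite ?mul1n ?mul0n ?count_pred0 //; elim: s. Qed.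

Section WordStatistics.
Variables (d' : Order.disp_t) (L : porderType d').
Local Open Scope order_scope.

Lemma last_not_ascent_cons (x : L) w : (1 < size w)%N ->
  last_not_ascent (x :: w) = last_not_ascent w.
Proof. by rewrite /last_not_ascent rev_cons -size_rev; case: (rev w) => [|a [|b r]]. Qed.

Lemma last_not_ascent2 (x y : L) : last_not_ascent [:: x; y] = ~~ (x <= y).
Proof. by []. Qed.

Lemma noDA_cons_nasc (x y : L) w : ~~ (x <= y) -> noDA [:: x, y & w] = noDA (y :: w).
Proof. by case: w => [|c w] //= /negbTE ->. Qed.

Lemma noDA_cons2 (x y u : L) w :
  noDA [:: x, y, u & w] = ~~ ((x <= y) && (y <= u)) && noDA [:: y, u & w].
Proof. by []. Qed.

Lemma asc_cons2 (x y : L) w : asc [:: x, y & w] = ((x <= y)%O + asc (y :: w))%N.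
Proof. by []. Qed.

(* Ascents of a word without double ascent whose last position is no ascent
   are isolated and not last, so 2 asc w <= size w - 1: the exponent of
   (1 + t) in [weight] is a true difference. *)
Lemma asc_bound N : forall w : seq L, (size w <= N)%N ->
  noDA w -> last_not_ascent w -> (2 * asc w <= (size w).-1)%N.
Proof.
elim: N => [|N IH] [|a [|c w]] // sw.
have sw' : (size w < N)%N by [].
case: (boolP (a <= c)) => ac.
- case: w sw sw' => [|e w] sw sw'; first by rewrite last_not_ascent2 ac.
  rewrite noDA_cons2 ac andTb => /andP [ce nd] ln.
  rewrite asc_cons2 ac asc_cons2 (negbTE ce) (noDA_cons_nasc _ ce) in nd *.
  have ln' : last_not_ascent (e :: w).
    case: w {sw sw' nd} ln => [|f w] ln //.
    by rewrite last_not_ascent_cons // last_not_ascent_cons // in ln.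
  have := IH (e :: w) (ltnW sw') nd ln' => /=.
  by case: N IH sw sw' => [|N] IH sw sw' //=; lia.
- move=> nd ln; rewrite asc_cons2 (negbTE ac) add0n.
  have nd' : noDA (c :: w).
    by case: w {sw sw' ln} nd => [|e w] //; rewrite noDA_cons2 (negbTE ac).
  have ln' : last_not_ascent (c :: w).
    by case: w {sw sw' nd nd'} ln => [|f w] ln //; rewrite last_not_ascent_cons // in ln.
  by have := IH (c :: w) sw' nd' ln' => /=; lia.
Qed.

End WordStatistics.

Section Weights.
Variables (d' : Order.disp_t) (L : porderType d') (t : nat) (z : L).
Local Open Scope order_scope.

Definition not_prodle (a b : L * bool) : bool := ~~ prodle a b.
Definition asc_free_ext (w : seq L) (bs : seq bool) : bool :=
  sorted not_prodle (rcons (zip w bs) (z, false)).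

Definition weight (w : seq L) : nat :=
  if noDA w && last_not_ascent w
  then (t ^ (asc w).+1 * (1 + t) ^ (size w - 1 - 2 * asc w))%N else 0%N.

(* Closed forms of the number of extensions of w when the preceding label is
   (c, false), resp. (c, true). *)
Definition weight_after0 (c : L) (w : seq L) : nat :=
  if w is d :: w3 then (if c <= d then 0%N else weight (d :: w3)) else 0%N.
Definition weight_after1 (c : L) (w : seq L) : nat :=
  if w is d :: w3 then (if c <= d then weight_after0 d w3 else weight (d :: w3))
  else 1%N.

Lemma weight_cons_nasc (a c : L) w : ~~ (a <= c) ->
  weight [:: a, c & w] = ((1 + t) * weight (c :: w))%N.
Proof.
rewrite /weight => ac; rewrite noDA_cons_nasc //.
have -> : last_not_ascent [:: a, c & w] = last_not_ascent (c :: w).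
  by case: w => [|e w]; [rewrite last_not_ascent2 ac | rewrite last_not_ascent_cons].
case: ifP => [/andP [nd ln]|]; last by rewrite muln0.
have := asc_bound (leqnn _) nd ln; rewrite asc_cons2 (negbTE ac) add0n /=.
set k := asc (c :: w) => hb.
by rewrite mulnCA -expnS; congr (_ * _ ^ _)%N; lia.
Qed.

Lemma weight_cons_asc (a c : L) w : a <= c ->
  weight [:: a, c & w] = (t * weight_after0 c w)%N.
Proof.
move=> ac; case: w => [|e w]; first by rewrite /weight last_not_ascent2 ac andbF muln0.
rewrite /weight_after0; case: (boolP (c <= e)) => ce.
  by rewrite /weight noDA_cons2 ac ce muln0.
rewrite /weight noDA_cons2 ac ce (noDA_cons_nasc _ ce).
have -> : last_not_ascent [:: a, c, e & w] = last_not_ascent (e :: w).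
  rewrite last_not_ascent_cons //.
  by case: w => [|f w]; [rewrite last_not_ascent2 ce | rewrite last_not_ascent_cons].
case: ifP => _; last by rewrite muln0.
rewrite asc_cons2 ac asc_cons2 (negbTE ce) add0n mulnA -expnS.
by congr (_ ^ _ * _ ^ _)%N; rewrite /=; lia.
Qed.

Definition ext_count (a : L) (w : seq L) (b : bool) : nat :=
  count (fun e => asc_free_ext (a :: w) (b :: map isSome e))
        (words_over (ext_letters t) (size w)).

Lemma ext_count_nil (a : L) (b : bool) : a <= z -> ext_count a [::] b = b.
Proof. by move=> az; rewrite /ext_count /= /asc_free_ext /= /not_prodle /prodle /= az; case: b. Qed.

Lemma ext_count_cons (a c : L) w b : ext_count a (c :: w) b =
  (not_prodle (a, b) (c, false) * ext_count c w false
   + t * (not_prodle (a, b) (c, true) * ext_count c w true))%N.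
Proof.
rewrite /ext_count /= (count_ext_words t (size w) (fun bs => asc_free_ext [:: a, c & w] (b :: bs))).
by rewrite /asc_free_ext /= -!count_andl.
Qed.

Lemma ext_count_closed (a : L) w : last a w <= z ->
  [/\ ext_count a w false = weight_after0 a w, ext_count a w true = weight_after1 a w &
      (ext_count a w false + t * ext_count a w true = weight (a :: w))%N].
Proof.
elim: w a => [|c w IH] a /= lz.
  by rewrite !ext_count_nil // /weight /= muln1 addn0 muln1.
have [Nf Nt Tot] := IH c lz.
rewrite !ext_count_cons Nf Nt /not_prodle /prodle /=.
case: (boolP (a <= c)) => ac /=.
- by rewrite (weight_cons_asc _ ac) !mul0n !muln0 !mul1n !addn0.
- rewrite Nf Nt in Tot; rewrite (weight_cons_nasc _ ac) !mul1n Tot.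
  by split => //; rewrite mulnDl mul1n.
Qed.

Lemma count_asc_free_ext (a : L) w : last a w <= z ->
  count (fun e => asc_free_ext (a :: w) (map isSome e))
        (words_over (ext_letters t) (size w).+1) = weight (a :: w).
Proof.
move=> lz; have [_ _ <-] := ext_count_closed lz.
by rewrite (count_ext_words t (size w) (asc_free_ext (a :: w))).
Qed.

End Weights.

Section Main.
Variables (d : Order.disp_t) (P : finPOrderType d) (n t : nat) (bot top : P)
  (d' : Order.disp_t) (L : porderType d') (lamP : hat P -> hat P -> L).
Local Open Scope order_scope.

Notation PL := (@poset_le d P).
Notation RL := (hle (@reesle d P t n)).

Definition labP (a b : P) : L := lamP (hin a) (hin b).
Definition top_label : L := lamP (hin top) htop.

Definition chainsP : seq (seq P) :=
  [seq c <- words_over (enum P) n.+1 | is_maxchain PL bot top c].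

Definition ext_words : seq (seq (option 'I_t)) := words_over (ext_letters t) n.

Definition lift (c : seq P) (e : seq (option 'I_t)) : seq (hat (Rees P t n)) :=
  lift_chain n bot [::] (behead c) e.

Definition asc_free_rees (s : seq (hat (Rees P t n))) : bool :=
  ascent_free (@prodle d' L) (labels (induced_label lamP) s).

Lemma chainsP_inv c : c \in chainsP -> exists c', [/\ c = bot :: c',
  path (coversb PL) bot c', last bot c' = top & size c' = n].
Proof.
rewrite mem_filter mem_words_over => /andP [+ /andP [/eqP sc _]].
case: c sc => [|a c'] //= [sc] /and3P [/eqP -> pc /eqP lc].
by exists c'.
Qed.

Lemma ext_words_size e : e \in ext_words -> size e = n.
Proof. by rewrite mem_words_over => /andP [/eqP]. Qed.

Lemma lifted_labelsE x0 c (e : seq (option 'I_t)) : size e = size c ->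
  lifted_labels lamP x0 c e =
  rcons (zip (pairmap labP x0 c) (map isSome e)) (lamP (hin (last x0 c)) htop, false).
Proof. by elim: c x0 e => [|x1 c IH] x0 [|a e] //= [/IH ->]. Qed.

Lemma maxchain_below_top (x : P) s : (forall y : P, y <= top) ->
  coversb PL x top -> is_maxchain (hle PL) (hin x) htop s -> s = [:: hin x; hin top; htop].
Proof.
move=> ht cx; have /andP [/andP [_ xnt] nb] := cx.
have not_between (y : P) : x <= y -> x != y -> y = top.
  move=> xy xny; apply/eqP; apply: contraT => ynt.
  by move/forallP: nb => /(_ y); rewrite /ltR /poset_le xy xny ht ynt.
case: s => [|a s] //= /and3P [/eqP -> ps /eqP ls].
case: s ps ls => [|b s] /= ps ls; first by case: ls.
case/andP: ps => cb ps.
case: b cb ps ls => [[y|]|] cb ps ls; last by rewrite no_cover_hbot in cb.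
- have /andP [/andP [xy xny] _] := cb; rewrite hin_eq in xny.
  have ey := not_between y xy xny; subst y.
  case: s ps ls => [|c s] /= ps ls; first by case: ls.
  case/andP: ps => cc ps.
  case: c cc ps ls => [[y|]|] cc ps ls; last by rewrite no_cover_hbot in cc.
  + have /andP [/andP [ty tny] _] := cc; rewrite hin_eq in tny.
    have ey : y = top by apply/le_anti/andP; split; [apply: ht | apply: ty].
    by rewrite ey eqxx in tny.
  + by case: s ps ls => [|e s] //= /andP []; rewrite no_cover_from_htop.
- case/andP: cb => /andP [_ _] /forallP /(_ (hin top)).
  by rewrite /ltR /poset_le /= hin_eq xnt ht.
Qed.

Hypotheses (hb : forall x : P, bot <= x) (ht : forall x : P, x <= top)
  (semi : semipure P) (hlen : poset_length P = n)
  (EL : EL_labeling (hle PL) (fun a b : L => (a <= b)%O) lamP).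

(* The EL property on [x, top^] for a coatom x: its unique maximal chain is
   increasing, so lambda_P(x, top) <= lambda_P(top, top^). *)
Lemma label_into_top (x : P) : coversb PL x top -> labP x top <= top_label.
Proof.
move=> cx; have [s [ms so _ _]] := @EL (hin x) htop isT.
by move: so; rewrite (maxchain_below_top ht cx ms) /= andbT.
Qed.

Lemma last_label_le x0 x1 c : path (coversb PL) x0 (x1 :: c) -> last x1 c = top ->
  last (labP x0 x1) (pairmap labP x1 c) <= top_label.
Proof.
elim: c x0 x1 => [|x2 c IH] x0 x1 /=.
  by rewrite andbT => cx e1; subst x1; apply: label_into_top.
by case/andP => _ pc lc; apply: IH.
Qed.

Lemma lift_sound c e : c \in chainsP -> e \in ext_words ->
  [/\ is_maxchain RL (hin (rees_bot t n bot)) htop (lift c e),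
      map (hat_x bot) (lift c e) = rcons c bot,
      pairmap (@hat_step d P n t) (hin (rees_bot t n bot)) (behead (lift c e))
        = rcons e None
    & asc_free_rees (lift c e) = asc_free_ext top_label (labels labP c) (map isSome e)].
Proof.
move=> /chainsP_inv [c' [-> pc lc sc]] /ext_words_size se.
set u := rees_bot t n bot.
have -> : lift (bot :: c') e = lift_chain n (rx u) (rw u) c' e by [].
have lcu : last (rx u) c' = top := lc.
have := lift_chain_sound bot ht semi hlen lamP (u := u) pc lcu (etrans se (esym sc)).
move=> /= [e1 [p1 l1] m1 d1 i1]; rewrite e1; split => //.
- by rewrite /= eqxx p1 l1 eqxx.
- by rewrite -e1 m1.
- by rewrite /asc_free_rees /= i1 lifted_labelsE ?se ?sc // lcu.
Qed.

Lemma lift_complete s : is_maxchain RL (hin (rees_bot t n bot)) htop s ->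
  exists c e, [/\ c \in chainsP, e \in ext_words & s = lift c e].
Proof.
case: s => [|a s] //= /and3P [/eqP -> ps /eqP ls].
have [c' [e [pc lc se ee]]] := lift_chain_complete ht semi hlen ps ls.
have mc : is_maxchain PL bot top (bot :: c') by rewrite /= eqxx pc /= lc eqxx.
have sc := maxchain_size hb ht semi hlen mc.
exists (bot :: c'), e; split => //.
- rewrite mem_filter mc mem_words_over sc eqxx andTb.
  by apply/allP => x _; apply: mem_enum.
- rewrite mem_words_over se; move: sc => /= [->]; rewrite eqxx /=.
  apply/allP => -[x|] _ //=; rewrite /ext_letters inE; apply/orP; right.
  by apply/mapP; exists x; rewrite ?mem_enum.
Qed.

Hypothesis n_pos : (1 <= n)%N.

Lemma count_asc_free_lifts c : c \in chainsP ->
  count (fun e => asc_free_rees (lift c e)) ext_words = weight t (labels labP c).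
Proof.
move=> cC; rewrite (eq_in_count (a2 := fun e =>
  asc_free_ext top_label (labels labP c) (map isSome e))); last first.
  by move=> e eE; have [_ _ _ ->] := lift_sound cC eE.
have [[|x1 c''] [ec pc lc sc]] := chainsP_inv cC; first by move: n_pos; rewrite -sc.
rewrite ec /= /ext_words -sc /= -(size_pairmap labP x1 c'').
by apply: count_asc_free_ext; apply: last_label_le.
Qed.

(* Lifting is a bijection from pairs (chain of P, extension word) onto the
   maximal chains of (P * T_{t,n})^+, so these are counted chain by chain. *)
Lemma card_asc_free_chains : card_is
    (fun s : seq (hat (Rees P t n)) =>
       is_maxchain RL (hin (rees_bot t n bot)) htop s && asc_free_rees s)
    (\sum_(c <- chainsP) weight t (labels labP c)).
Proof.
exists [seq s <- [seq lift c e | c <- chainsP, e <- ext_words] | asc_free_rees s]; split.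
- apply/filter_uniq/allpairs_uniq.
  + exact/filter_uniq/uniq_words_over/enum_uniq.
  + apply: uniq_words_over; rewrite /ext_letters cons_uniq map_inj_uniq ?enum_uniq;
      last by move=> ?? [].
    by rewrite andbT; apply/mapP => -[].
  + move=> [c1 e1] [c2 e2] /allpairsP [[c1' e1'] [h1 h2 [-> ->]]].
    move=> /allpairsP [[c2' e2'] [h3 h4 [-> ->]]] /= eq.
    have [_ m1 d1 _] := lift_sound h1 h2; have [_ m2 d2 _] := lift_sound h3 h4.
    have := m1; rewrite eq m2 => /rcons_inj [->].
    by have := d1; rewrite eq d2 => /rcons_inj [->].
- move=> s; rewrite mem_filter andbC; congr andb.
  apply/allpairsP/idP => [[[c e] /= [cC eE ->]]|ms].
    by have [] := lift_sound cC eE.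
  by have [c [e [cC eE ->]]] := lift_complete ms; exists (c, e).
- by rewrite size_filter count_allpairs; apply: eq_big_seq => c /count_asc_free_lifts.
Qed.

End Main.

Section Regrouping.
Variables (d : Order.disp_t) (P : finPOrderType d) (n t : nat) (bot top : P)
  (d' : Order.disp_t) (L : porderType d') (lamP : hat P -> hat P -> L).

Lemma labels_in_alphabet x s :
  all (mem (undup (labels_of_P lamP))) (pairmap (labP lamP) x s).
Proof.
elim: s x => [|y s IH] x //=; rewrite IH andbT mem_undup.
by apply: allpairs_f; rewrite mem_enum.
Qed.

Lemma cP_count w : size w = n ->
  cP bot top lamP w = count (fun c => labels (labP lamP) c == w) (chainsP n bot top).
Proof.
move=> sw; rewrite /cP (card_tuple_count _ (fun s : seq P =>
  is_maxchain (@poset_le d P) bot top s && (labels (labP lamP) s == w))).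
by rewrite sw /chainsP count_filter; apply: eq_count => c; rewrite /= andbC.
Qed.

Lemma sum_over_chains :
  (\sum_(w <- words (undup (labels_of_P lamP)) n | NDA n w && last_not_ascent w)
     cP bot top lamP w * t ^ (asc w).+1 * (1 + t) ^ (n - 1 - 2 * asc w))%N =
  (\sum_(c <- chainsP n bot top) weight t (labels (labP lamP) c))%N.
Proof.
rewrite big_mkcond words_words_over -(@sum_by_value _ _
  (words_over (undup (labels_of_P lamP)) n) _ (labels (labP lamP)) (weight t)).
- apply: eq_big_seq => w; rewrite mem_words_over => /andP [/eqP sw _].
  rewrite -cP_count // /weight /NDA sw eqxx /=.
  by case: ifP => _; rewrite ?muln0 // mulnA.
- exact/uniq_words_over/undup_uniq.
- apply/allP => c /chainsP_inv [c' [-> _ _ sc]].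
  by rewrite mem_words_over /= size_pairmap sc eqxx labels_in_alphabet.
Qed.

End Regrouping.

Theorem theorem3p5
  (d : Order.disp_t) (P : finPOrderType d) (n t : nat) (bot top : P)
  (d' : Order.disp_t) (L : porderType d') (lamP : hat P -> hat P -> L) :
  (forall x : P, (bot <= x)%O) ->
  (forall x : P, (x <= top)%O) ->
  semipure P ->
  poset_length P = n ->
  (1 <= n)%N ->
  (1 <= t)%N ->
  EL_labeling (hle (@poset_le d P)) (fun a b : L => (a <= b)%O) lamP ->
  card_is
    (fun s : seq (hat (Rees P t n)) =>
       is_maxchain (hle (@reesle d P t n)) (hin (rees_bot t n bot)) htop s
       && ascent_free (@prodle d' L) (labels (induced_label lamP) s))
    (\sum_(w <- words (undup (labels_of_P lamP)) n |
              NDA n w && last_not_ascent w)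
        cP bot top lamP w * t ^ (asc w).+1 * (1 + t) ^ (n - 1 - 2 * asc w))%N.
Proof.
move=> hb ht semi hlen n_pos _ EL.
rewrite sum_over_chains.
exact: card_asc_free_chains hb ht semi hlen EL n_pos.
Qed.
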